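(* The equation $$p^{\alpha-2}(p^2-1)=q^{\beta-2}(q^2-1)$$ in integers $\alpha,\beta$ and primes $p<q$ has only finitely many solutions $(p,\alpha,q,\beta)$, namely exactly $(2,5,3,3)$, $(2,5,5,2)$, $(2,6,7,2)$, $(3,3,5,2)$ and $(5,3,11,2)$. *)

From mathcomp Require Import all_boot all_order all_algebra.

From mathcomp Require Import all_boot all_order all_algebra zify ring.
Import GRing.Theory Num.Theory.

(* Since p does not divide p^2 - 1 (nor q divide q^2 - 1), clearing
   denominators shows that both exponents m = alpha - 2 and n = beta - 2 are
   nonnegative.  If n > 0, then q divides p^2 - 1 = (p - 1)(p + 1), so
   q = p + 1, i.e. (p, q) = (2, 3).  If n = 0, then p^m (p^2 - 1) = (q - 1)(q + 1).
   For p = 2, writing q = 2r + 1 gives r (r + 1) = 3 * 2^(m - 2), and the odd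
   one of r, r + 1 divides 3.  For odd p, p^m divides one of q -+ 1, say
   q + e = k p^m with e = +-1; then p^2 - 1 = k (q - e), so p divides 2k - e,
   and k < p forces 2k - e = p, whence (p + e) p^(m - 1) = 4. *)

Lemma ndvdn_sqr_sub1 {p} : 1 < p -> ~~ (p %| p ^ 2 - 1).
Proof.
move=> p_gt1; have -> : p ^ 2 - 1 = (p - 1) * p + (p - 1) by nia.
by rewrite dvdn_addr ?dvdn_mull // gtnNdvd //; lia.
Qed.

Section RationalExponents.
Local Open Scope ring_scope.

Lemma natr_sqr_sub1 (R : pzRingType) (n : nat) :
  (0 < n)%N -> (n%:R : R) ^+ 2 - 1 = (n ^ 2 - 1)%N%:R.
Proof. by move=> n_gt0; rewrite natrB ?natrX // expn_gt0 n_gt0. Qed.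

Lemma exprz_eq_exponent_ge0 {F : numFieldType} {p q x y : nat} {a b : int} :
  prime p -> prime q -> p != q -> ~~ (p %| x)%N ->
  (p%:R : F) ^ a * x%:R = q%:R ^ b * y%:R -> 0 <= a.
Proof.
move=> pp pq neq_pq ndvd_px; case: a => // i E.
have natX_neq0 (r k : nat) : prime r -> (r%:R : F) ^+ k != 0.
  by move=> pr; rewrite expf_neq0 // pnatr_eq0 -lt0n prime_gt0.
have [j [z Ej]] : exists j z, (q ^ j * x = p ^ i.+1 * z)%N.
  case: b E => j E; [exists 0%N, (q ^ j * y)%N | exists j.+1, y];
    apply/eqP; rewrite -(eqr_nat F) !natrM !natrX.
  - by rewrite -E mulrA mulrV ?mul1r ?unitfE ?natX_neq0.
  - move: E; rewrite /exprz mulrC [_^-1 * _]mulrC => /eqP.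
    by rewrite eqr_div ?natX_neq0 // mulrC => /eqP ->; rewrite mulrC.
have : (p %| q ^ j * x)%N by rewrite Ej expnS -mulnA dvdn_mulr.
have coprime_pq : coprime p (q ^ j) by rewrite coprimeXr // prime_coprime // dvdn_prime2.
by rewrite Gauss_dvdr // (negPf ndvd_px).
Qed.

End RationalExponents.

Lemma prime_succ_prime p : prime p -> prime p.+1 -> p = 2.
Proof.
move=> pp pSp; case: (even_prime pp) => // odd_p.
by case: (even_prime pSp) => [[p1]|]; [rewrite p1 in pp | rewrite /= odd_p].
Qed.

Lemma prime_dvdn_sqr_sub1 {p q} : prime q -> 1 < p -> p < q -> q %| p ^ 2 - 1 ->
  q = p.+1.
Proof.
move=> pq p_gt1 lt_pq.
rewrite -{2}(exp1n 2) subn_sqr Euclid_dvdM // gtnNdvd ?subn_gt0 //=; last by lia.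
by rewrite addn1 => /(dvdn_leq (ltn0Sn p)); lia.
Qed.

Lemma pow2_mul3_eq_sqr_sub1 {m q} : odd q -> 2 ^ m * 3 = q ^ 2 - 1 ->
  (m, q) = (3, 5) \/ (m, q) = (4, 7).
Proof.
move=> odd_q E; have [r def_q] : exists r, q = 2 * r + 1.
  by exists q./2; rewrite -{1}(odd_double_half q) odd_q -muln2; lia.
have {}E : 2 ^ m * 3 = 4 * (r * r.+1) by rewrite E def_q; nia.
case: m E => [|[|j]] E; [lia | lia | ].
have {}E : r * r.+1 = 2 ^ j * 3 by move: E; rewrite !expnS; lia.
have odd_dvd3 d : odd d -> d %| r * r.+1 -> d <= 3.
  move=> odd_d; rewrite E Gauss_dvdr ?coprimeXr ?coprimen2 //.
  exact: dvdn_leq.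
have r_le3 : r <= 3.
  case odd_r: (odd r); first by apply: odd_dvd3; rewrite ?dvdn_mulr.
  by have := odd_dvd3 r.+1; rewrite /= odd_r dvdn_mull //; lia.
have pow2_gt0 : 0 < 2 ^ j by rewrite expn_gt0.
have pow2_inj k : 2 ^ j = 2 ^ k -> j = k by apply: expnI.
case: r def_q r_le3 E {odd_dvd3} => [|[|[|[|]]]] // -> _ E; [lia | lia | left | right].
- by rewrite (pow2_inj 1) //; lia.
- by rewrite (pow2_inj 2) //; lia.
Qed.

Section OddPrime.
Local Open Scope ring_scope.

Lemma sqr_sub1_cofactor_solutions {p P q k e : int} :
  e = 1 \/ e = -1 -> 3 <= p -> p < q -> P = 1 \/ p <= P ->
  q + e = k * (p * P) -> p ^+ 2 - 1 = k * (q - e) ->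
  P = 1 /\ (p = 3 /\ q = 5 \/ p = 5 /\ q = 11).
Proof.
move=> e_pm1 p_ge3 lt_pq P_1_or_ge Eq Ep.
have k_gt0 : 0 < k by nia.
have k_lt_p : k < p by nia.
have [c dvd_p] : exists c, 2 * k - e = p * c.
  exists (e * (k ^+ 2 * P - p)).
  have Eqk : k * (q + e) = k * (k * (p * P)) by rewrite Eq.
  by case: e_pm1 Eqk => -> ; lia.
have two_k : 2 * k = p + e.
  have c_gt0 : 0 < c by clear -dvd_p e_pm1 k_gt0 p_ge3; nia.
  have c_lt2 : c < 2 by clear -dvd_p e_pm1 k_lt_p p_ge3; nia.
  have c1 : c = 1 by lia.
  by move: dvd_p; rewrite c1; lia.
have P4 : (p + e) * P = 4.
  have Eq2 : (p + e) * (2 * (q + e)) = (p + e) * ((p + e) * p * P).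
    by rewrite Eq -two_k; ring.
  have Ep4 : 4 * (p ^+ 2 - 1) = (p + e) * (2 * q - 2 * e) by rewrite Ep -two_k; ring.
  have : (p + e) * p * ((p + e) * P - 4) = 0.
    by case: e_pm1 Eq2 Ep4 => -> Eq2 Ep4; lia.
  by move/eqP; rewrite !mulf_eq0 subr_eq0; nia.
have P1 : P = 1.
  by case: P_1_or_ge => // le_pP; clear -P4 le_pP p_ge3 e_pm1; nia.
split=> //; move: P4; rewrite P1 mulr1 => p_e.
by case: e_pm1 p_e => -> p_e; [left|right]; nia.
Qed.

End OddPrime.

Lemma odd_prime_pow_mul_sqr_sub1 {p q m} : prime p -> 2 < p -> p < q ->
  p ^ m * (p ^ 2 - 1) = q ^ 2 - 1 -> (p, m, q) = (3, 1, 5) \/ (p, m, q) = (5, 1, 11).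
Proof.
move=> pp p_gt2 lt_pq E.
case: m E => [|j] E; first by exfalso; nia.
have dvd_pq : p ^ j.+1 %| (q - 1) * (q + 1).
  by rewrite -(exp1n 2) -subn_sqr -E dvdn_mulr.
have [e [k [e_pm1 Eq Ep]]] : exists e k : int, ([/\ e = 1 \/ e = -1,
    q%:Z + e = k * (p%:Z * (p ^ j)%N%:Z) & p%:Z ^+ 2 - 1 = k * (q%:Z - e)])%R.
  have [ndvd_sub1|ndvd_add1] : ~~ (p %| q - 1) \/ ~~ (p %| q + 1).
    case: (boolP (p %| q - 1)) => [dvd_sub1|]; [right|by left].
    apply/negP => /dvdn_sub/(_ dvd_sub1).
    by rewrite (_ : q + 1 - (q - 1) = 2) => [/(dvdn_leq _)|]; lia.
  - move: dvd_pq; rewrite Gauss_dvdr ?coprimeXl ?prime_coprime // => /dvdnP[k Eq].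
    exists 1%R, k; split; [by left | by rewrite expnS in Eq; lia |].
    have : p ^ j.+1 * (p ^ 2 - 1) = p ^ j.+1 * (k * (q - 1)).
      by rewrite E -(exp1n 2) subn_sqr Eq; lia.
    by move/eqP; rewrite eqn_pmul2l ?expn_gt0 ?prime_gt0 // => /eqP; lia.
  - move: dvd_pq; rewrite Gauss_dvdl ?coprimeXl ?prime_coprime // => /dvdnP[k Eq].
    exists (-1)%R, k; split; [by right | by rewrite expnS in Eq; lia |].
    have : p ^ j.+1 * (p ^ 2 - 1) = p ^ j.+1 * (k * (q + 1)).
      by rewrite E -(exp1n 2) subn_sqr Eq; lia.
    by move/eqP; rewrite eqn_pmul2l ?expn_gt0 ?prime_gt0 // => /eqP; lia.
have P_1_or_ge : ((p ^ j)%N%:Z = 1 \/ p%:Z <= (p ^ j)%N%:Z)%R.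
  case: j {dvd_pq Eq Ep E} => [|j]; [by left | right].
  by rewrite lez_nat expnS leq_pmulr ?expn_gt0 ?prime_gt0.
have p_ge3 : (3 <= p%:Z)%R by lia.
have lt_pq_int : (p%:Z < q%:Z)%R by lia.
have [P1 sols] := sqr_sub1_cofactor_solutions e_pm1 p_ge3 lt_pq_int P_1_or_ge Eq Ep.
have -> : j = 0 by apply: (expnI (prime_gt1 pp)); rewrite expn0; lia.
by case: sols => [[ep eq]|[ep eq]]; [left | right]; congr (_, _, _); lia.
Qed.

Lemma prime_pow_mul_sqr_sub1_eq {p q m n} : prime p -> prime q -> p < q ->
  p ^ m * (p ^ 2 - 1) = q ^ n * (q ^ 2 - 1) ->
  (p, m, q, n) = (2, 3, 3, 1) \/ (p, m, q, n) = (2, 3, 5, 0) \/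
  (p, m, q, n) = (2, 4, 7, 0) \/ (p, m, q, n) = (3, 1, 5, 0) \/
  (p, m, q, n) = (5, 1, 11, 0).
Proof.
move=> pp pq lt_pq E.
have odd_q : odd q by case: (even_prime pq) => // q2; move: (prime_gt1 pp); lia.
case: n E => [|n] E.
- rewrite expn0 mul1n in E; case: (even_prime pp) => [p2 | odd_p].
  + by subst p; case: (pow2_mul3_eq_sqr_sub1 odd_q E) => [[-> ->]|[-> ->]]; tauto.
  + have p_gt2 := odd_prime_gt2 odd_p pp.
    by case: (odd_prime_pow_mul_sqr_sub1 pp p_gt2 lt_pq E) => [[-> -> ->]|[-> -> ->]]; tauto.
have q_dvd : q %| p ^ 2 - 1.
  have : q %| p ^ m * (p ^ 2 - 1) by rewrite E expnS -mulnA dvdn_mulr.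
  by rewrite Euclid_dvdM // Euclid_dvdX // dvdn_prime2 // gtn_eqF.
have def_q := prime_dvdn_sqr_sub1 pq (prime_gt1 pp) lt_pq q_dvd.
have p2 : p = 2 by apply: prime_succ_prime pp _; rewrite -def_q.
subst q p; case: n E => [|n] E.
- by left; rewrite (expnI (ltnSn 1) (_ : 2 ^ m = 2 ^ 3)) //; lia.
- have : 3 %| 2 ^ m by apply/dvdnP; exists (3 ^ n * 8); move: E; rewrite !expnS; lia.
  by rewrite Euclid_dvdX.
Qed.

Local Open Scope ring_scope.

Theorem proposition1 (p q : nat) (alpha beta : int) :
  prime p -> prime q -> (p < q)%N ->
  ((p%:R : rat) ^ (alpha - 2) * ((p%:R : rat) ^+ 2 - 1)
     = (q%:R : rat) ^ (beta - 2) * ((q%:R : rat) ^+ 2 - 1)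
   <->
   (p, alpha, q, beta) = (2%N, 5%Z, 3%N, 3%Z) \/
       (p, alpha, q, beta) = (2%N, 5%Z, 5%N, 2%Z) \/
       (p, alpha, q, beta) = (2%N, 6%Z, 7%N, 2%Z) \/
       (p, alpha, q, beta) = (3%N, 3%Z, 5%N, 2%Z) \/
       (p, alpha, q, beta) = (5%N, 3%Z, 11%N, 2%Z)).
Proof.
move=> pp pq lt_pq; have neq_pq : p != q by rewrite neq_ltn lt_pq.
rewrite !natr_sqr_sub1 ?prime_gt0 //; split=> [E|]; last first.
  by case=> [|[|[|[|]]]] [-> -> -> ->]; apply/eqP; vm_compute.
have := exprz_eq_exponent_ge0 pp pq neq_pq (ndvdn_sqr_sub1 (prime_gt1 pp)) E.
rewrite eq_sym in neq_pq.
have := exprz_eq_exponent_ge0 pq pp neq_pq (ndvdn_sqr_sub1 (prime_gt1 pq)) (esym E).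
move=> /gez0_abs def_b /gez0_abs def_a.
rewrite -def_a -def_b -!exprnP -!natrX -!natrM in E; move/eqP: E; rewrite eqr_nat => /eqP E.
rewrite -(subrK 2 alpha) -(subrK 2 beta) -def_a -def_b.
by case: (prime_pow_mul_sqr_sub1_eq pp pq lt_pq E) => [|[|[|[|]]]] [-> -> -> ->]; tauto.
Qed.
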